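(* Let $A=\mathrm{diag}(\lambda_1,\ldots,\lambda_n)$ with $1=\lambda_1\le\lambda_2\le\cdots\le\lambda_n$, let $b\in\mathbb{R}^n$, and $f(x)=\tfrac12x^TAx-b^Tx$, with gradient $g(x)=Ax-b$. Consider the gradient method $x_{k+1}=x_k-\alpha_kg_k$, $g_k=g(x_k)$, started from $x_1\in\mathbb{R}^n$ with an arbitrary first stepsize $\alpha_1>0$, and for $k\ge2$ (as long as $g_{k-1}\neq0$) $$\alpha_k=\gamma_k\frac{s_{k-1}^Ts_{k-1}}{s_{k-1}^Ty_{k-1}}+(1-\gamma_k)\frac{s_{k-1}^Ty_{k-1}}{y_{k-1}^Ty_{k-1}},\qquad s_{k-1}=x_k-x_{k-1},\ y_{k-1}=g_k-g_{k-1},$$ where $\gamma_k\in[0,1]$ for every $k$. Then either $g_k=0$ for some finite $k$, or the sequence $\{\|g_k\|\}$ converges to zero $R$-linearly.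
   Context: $\|\cdot\|$ is the Euclidean norm. A nonnegative sequence $\{a_k\}$ converges to zero $R$-linearly if there exist constants $C>0$ and $c\in(0,1)$ with $a_k\le Cc^k$ for all $k$. *)

From HB Require Import structures.
From mathcomp Require Import all_boot all_order all_algebra.
From mathcomp Require Import reals.
Set Implicit Arguments. Unset Strict Implicit. Unset Printing Implicit Defensive.
Import Order.TTheory GRing.Theory Num.Theory.
Local Open Scope ring_scope.

Definition dotv (R : realType) (n : nat) (u v : 'cV[R]_n) : R := (u^T *m v) 0 0.

Definition enorm (R : realType) (n : nat) (u : 'cV[R]_n) : R := Num.sqrt (dotv u u).

Definition diagA (R : realType) (n : nat) (lam : 'I_n -> R) : 'M[R]_n :=
  diag_mx (\row_i lam i).

Definition grad (R : realType) (n : nat) (lam : 'I_n -> R) (b x : 'cV[R]_n)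
  : 'cV[R]_n := diagA lam *m x - b.

Definition R_linear_to_zero (R : realType) (a : nat -> R) : Prop :=
  exists (C c : R), 0 < C /\ 0 < c < 1 /\ forall k, (1 <= k)%N -> a k <= C * c ^+ k.

(** Each gradient coordinate evolves by [g_(k+1)^(i) = (1 - alpha_k lambda_i) g_k^(i)].
    The stepsize [alpha_(k+1)] is a convex combination of the two Barzilai-Borwein
    stepsizes, which are ratios [M_m / M_(m+1)] of consecutive moments
    [M_m = sum_i lambda_i^m (g_k^(i))^2].  Hence [1/lambda_n <= alpha_k <= 1], so every
    factor is at most [lambda_n] in modulus, and [alpha_(k+1)] has Dai's Property A:
    once the first [j-1] components of [g_k] carry little mass compared with the
    [j]-th one, [alpha_(k+1) lambda_j <= 3/2], so the [j]-th factor contracts by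
    [1 - 1/(4 lambda_n)].  Induction on [j] shows that each squared component, hence
    [||g_k||^2], converges to zero R-linearly. *)
From HB Require Import structures.
From mathcomp Require Import all_boot all_order all_algebra.
From mathcomp Require Import boolp reals.
From mathcomp Require Import ring lra.
Set Implicit Arguments. Unset Strict Implicit. Unset Printing Implicit Defensive.
Import Order.TTheory GRing.Theory Num.Theory.
Local Open Scope ring_scope.

Definition head_sum (V : nmodType) n (w : 'I_n -> V) (l : nat) : V :=
  \sum_(i < n | (i < l)%N) w i.

Lemma head_sumS (V : nmodType) n (w : 'I_n -> V) l (hl : (l < n)%N) :
  head_sum w l.+1 = w (Ordinal hl) + head_sum w l.
Proof.
rewrite /head_sum (bigD1 (Ordinal hl)) //=; congr (_ + _).
apply: eq_bigl => i; rewrite ltnS [(i < l)%N]ltn_neqAle andbC.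
by congr (_ && _); rewrite -val_eqE.
Qed.

Lemma head_sum_all (V : nmodType) n (w : 'I_n -> V) :
  head_sum w n = \sum_(i < n) w i.
Proof. by apply: eq_bigl => i; rewrite ltn_ord. Qed.

Lemma head_small_weighted_sum_ge (R : realFieldType) n (v mu : 'I_n -> R)
    (j : 'I_n) (e : R) :
  (forall i, 0 <= v i) -> (forall i, 0 <= mu i) ->
  (forall i k : 'I_n, (i <= k)%N -> mu i <= mu k) ->
  head_sum v j <= e -> 2 * e <= v j ->
  2 / 3 * mu j * \sum_(i < n) v i <= \sum_(i < n) mu i * v i.
Proof.
move=> v_ge0 mu_ge0 mu_sorted head_le vj_ge.
rewrite (bigID (fun i : 'I_n => (i < j)%N)) /=.
rewrite [X in _ <= X](bigID (fun i : 'I_n => (i < j)%N)) /=.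
rewrite /head_sum in head_le.
set A := \sum_(i < n | (i < j)%N) v i in head_le *.
set B := \sum_(i < n | ~~ (i < j)%N) v i.
set X := \sum_(i < n | (i < j)%N) (mu i * v i).
set Y := \sum_(i < n | ~~ (i < j)%N) (mu i * v i).
have X_ge0 : 0 <= X by apply: sumr_ge0 => i _; rewrite mulr_ge0.
have A_ge0 : 0 <= A by apply: sumr_ge0.
have tail_ge : mu j * B <= Y.
  rewrite mulr_sumr; apply: ler_sum => i hi.
  by apply: ler_wpM2r => //; apply: mu_sorted; rewrite leqNgt.
have vj_le : v j <= B.
  rewrite /B (bigD1 j) /= ?ltnn // lerDl.
  by apply: sumr_ge0.
have := mu_ge0 j; nra.
Qed.

Definition moment (R : pzSemiRingType) n (lam w : 'I_n -> R) (m : nat) : R :=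
  \sum_(i < n) lam i ^+ m * w i.

Definition moment_ratio (R : fieldType) n (lam w : 'I_n -> R) (m : nat) : R :=
  moment lam w m / moment lam w m.+1.

Section Moments.

Variables (R : realFieldType) (n : nat) (lam w : 'I_n -> R) (L : R).
Hypotheses (lam_bound : forall i, 1 <= lam i <= L) (w_ge0 : forall i, 0 <= w i).

Lemma moment_le_succ m : moment lam w m <= moment lam w m.+1.
Proof.
apply: ler_sum => i _; rewrite exprS -mulrA ler_peMl //.
  by rewrite mulr_ge0 // exprn_ge0 //; case/andP: (lam_bound i) => ? _; lra.
by case/andP: (lam_bound i).
Qed.

Lemma moment_succ_le m : moment lam w m.+1 <= L * moment lam w m.
Proof.
rewrite mulr_sumr; apply: ler_sum => i _; rewrite exprS -mulrA.
have := lam_bound i => /andP[lam_ge1 lam_le].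
by apply: ler_wpM2r => //; rewrite mulr_ge0 // exprn_ge0 //; lra.
Qed.

Lemma moment_gt0 m : 0 < moment lam w 0 -> 0 < moment lam w m.
Proof.
move=> M0_gt0; elim: m => // m IH.
exact: lt_le_trans IH (moment_le_succ m).
Qed.

Lemma moment_ratio_bound m : 0 < moment lam w 0 ->
  L^-1 <= moment_ratio lam w m <= 1.
Proof.
move=> M0_gt0; have Mm_gt0 := moment_gt0 m M0_gt0.
have MS_gt0 := moment_gt0 m.+1 M0_gt0.
have L_gt0 : 0 < L.
  by rewrite -(pmulr_lgt0 _ Mm_gt0); exact: lt_le_trans MS_gt0 (moment_succ_le m).
rewrite /moment_ratio ler_pdivrMr // mul1r moment_le_succ andbT.
by rewrite ler_pdivlMr // ler_pdivrMl // moment_succ_le.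
Qed.

Lemma moment_ratio_propertyA m (j : 'I_n) e :
  (forall i k : 'I_n, (i <= k)%N -> lam i <= lam k) -> 0 < moment lam w 0 ->
  head_sum w j <= e -> 2 * L ^+ m * e <= w j -> moment_ratio lam w m * lam j <= 3 / 2.
Proof.
move=> lam_sorted M0_gt0 head_le wj_ge.
have lam_ge1 i : 1 <= lam i by case/andP: (lam_bound i).
have lamX_ge1 i : 1 <= lam i ^+ m by rewrite exprn_ege1.
have L_ge1 : 1 <= L by case/andP: (lam_bound j) => ? ?; lra.
have LX_ge0 : 0 <= L ^+ m by rewrite exprn_ge0 //; lra.
have weighted := @head_small_weighted_sum_ge R n (fun i => lam i ^+ m * w i) lam j
  (L ^+ m * e).
have {weighted}moment_ge : 2 / 3 * lam j * moment lam w m <= moment lam w m.+1.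
  rewrite /moment; under [X in _ <= X]eq_bigr do rewrite exprS -mulrA.
  apply: weighted => //.
  - by move=> i; rewrite mulr_ge0 //; have := lamX_ge1 i; lra.
  - by move=> i; have := lam_ge1 i; lra.
  - apply: le_trans (ler_wpM2l LX_ge0 head_le).
    rewrite /head_sum mulr_sumr; apply: ler_sum => i _.
    have lam_ge0 : 0 <= lam i by have := lam_ge1 i; lra.
    have L_ge0 : 0 <= L by lra.
    by apply: ler_wpM2r => //; rewrite lerXn2r ?nnegrE //; case/andP: (lam_bound i).
  - by rewrite mulrA; exact: le_trans wj_ge (ler_peMl (w_ge0 j) (lamX_ge1 j)).
have MS_gt0 := moment_gt0 m.+1 M0_gt0.
rewrite /moment_ratio mulrAC ler_pdivrMr //; lra.
Qed.

End Moments.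

Lemma convex_comb_le (R : realDomainType) (t r s h : R) :
  0 <= t <= 1 -> r <= h -> s <= h -> t * r + (1 - t) * s <= h.
Proof. move=> /andP[? ?] ? ?; nra. Qed.

Lemma convex_comb_ge (R : realDomainType) (t r s h : R) :
  0 <= t <= 1 -> h <= r -> h <= s -> h <= t * r + (1 - t) * s.
Proof. move=> /andP[? ?] ? ?; nra. Qed.

Lemma geometric_bound_of_step (R : realFieldType) (v : nat -> R) (q rho E : R) K :
  0 < rho -> 0 <= q <= rho -> 0 <= E -> 0 <= v K ->
  (forall k, (K <= k)%N -> v k.+1 <= q * v k \/ v k.+1 <= E * rho ^+ k.+1) ->
  forall k, (K <= k)%N -> v k <= (v K / rho ^+ K + E) * rho ^+ k.
Proof.
move=> rho_gt0 /andP[q_ge0 q_le] E_ge0 vK_ge0 step.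
set D := _ + E.
have rhoX_gt0 k : 0 < rho ^+ k by exact: exprn_gt0.
have D_ge0 : 0 <= D by rewrite addr_ge0 // divr_ge0 // ltW.
have vK_le : v K <= D * rho ^+ K.
  by rewrite mulrDl divfK ?gt_eqF // lerDl mulr_ge0 // ltW.
elim=> [|k IH]; first by rewrite leqn0 => /eqP <-.
rewrite leq_eqVlt => /orP[/eqP <- //|hk]; have vk_le := IH hk.
have DX_ge0 : 0 <= D * rho ^+ k by rewrite mulr_ge0 // ltW.
have [vk1_le|vk1_le] := step k hk.
- apply: le_trans vk1_le _; apply: le_trans (ler_wpM2l q_ge0 vk_le) _.
  by rewrite exprS mulrCA ler_wpM2l // ler_wpM2r // ltW.
- apply: le_trans vk1_le _; apply: ler_wpM2r; first exact: ltW.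
  by rewrite /D ler_wpDl // divr_ge0 // ltW.
Qed.

Lemma R_linear_to_zero_le (R : realType) (u v : nat -> R) :
  (forall k, (1 <= k)%N -> v k <= u k) -> R_linear_to_zero u -> R_linear_to_zero v.
Proof.
move=> v_le [C [c [C_gt0 [c01 u_le]]]]; exists C, c; split=> //; split=> // k hk.
exact: le_trans (v_le k hk) (u_le k hk).
Qed.

Lemma R_linear_to_zero_eventually (R : realType) (v : nat -> R) (D c : R) K :
  0 < c < 1 -> (forall k, (K <= k)%N -> v k <= D * c ^+ k) -> R_linear_to_zero v.
Proof.
move=> c01 v_tail; have c_gt0 : 0 < c by case/andP: c01.
have cX_gt0 k : 0 < c ^+ k by exact: exprn_gt0.
set S := \sum_(i < K) `|v i| / c ^+ i.
have S_ge0 : 0 <= S by apply: sumr_ge0 => i _; rewrite divr_ge0 // ltW.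
exists (`|D| + S + 1), c; split; first by have := normr_ge0 D; lra.
split=> // k _; case: (leqP K k) => [/v_tail vk_le | k_lt].
- apply: le_trans vk_le _; apply: ler_wpM2r; first exact: ltW.
  by have := ler_norm D; lra.
- have vk_le : `|v k| / c ^+ k <= S.
    rewrite /S (bigD1 (Ordinal k_lt)) //= ler_wpDr //.
    by apply: sumr_ge0 => i _; rewrite divr_ge0 // ltW.
  apply: le_trans (ler_norm (v k)) _.
  rewrite -ler_pdivrMr //; apply: le_trans vk_le _; have := normr_ge0 D; lra.
Qed.

Lemma R_linear_to_zeroD (R : realType) (u v : nat -> R) :
  R_linear_to_zero u -> R_linear_to_zero v -> R_linear_to_zero (fun k => u k + v k).
Proof.
move=> [Cu [cu [Cu_gt0 [/andP[cu_gt0 cu_lt1] u_le]]]].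
move=> [Cv [cv [Cv_gt0 [/andP[cv_gt0 cv_lt1] v_le]]]].
set c := Num.max cu cv.
have c_gt0 : 0 < c by rewrite lt_max cu_gt0.
have powX_le k d : 0 < d -> d <= c -> d ^+ k <= c ^+ k.
  by move=> d_gt0 d_le; rewrite lerXn2r ?nnegrE // ltW.
exists (Cu + Cv), c; split; first lra.
split; first by rewrite c_gt0 gt_max cu_lt1.
move=> k hk; rewrite mulrDl lerD //.
- apply: le_trans (u_le k hk) _; apply: ler_wpM2l; first exact: ltW.
  by apply: powX_le; rewrite ?le_max ?lexx.
- apply: le_trans (v_le k hk) _; apply: ler_wpM2l; first exact: ltW.
  by apply: powX_le; rewrite ?le_max ?lexx ?orbT.
Qed.

Lemma R_linear_to_zero_sqrt (R : realType) (u : nat -> R) :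
  R_linear_to_zero u -> R_linear_to_zero (fun k => Num.sqrt (u k)).
Proof.
move=> [C [c [C_gt0 [/andP[c_gt0 c_lt1] u_le]]]].
exists (Num.sqrt C), (Num.sqrt c); split; first by rewrite sqrtr_gt0.
split; first by rewrite sqrtr_gt0 c_gt0 /= -sqrtr1 ltr_sqrt.
move=> k hk; have bound_ge0 : 0 <= Num.sqrt C * Num.sqrt c ^+ k.
  by rewrite mulr_ge0 ?sqrtr_ge0 // exprn_ge0 ?sqrtr_ge0.
have -> : Num.sqrt C * Num.sqrt c ^+ k = Num.sqrt (C * c ^+ k).
  rewrite -[LHS]ger0_norm // -sqrtr_sqr exprMn -exprM mulnC exprM.
  by rewrite !sqr_sqrtr // ltW.
exact: ler_wsqrtr (u_le k hk).
Qed.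

Section PropertyA.

Variables (R : realType) (n : nat) (lam : 'I_n.+1 -> R) (L : R).
Variables (a : nat -> R) (w : nat -> 'I_n.+1 -> R).
Hypotheses (lam_bound : forall i, 1 <= lam i <= L) (w_ge0 : forall k i, 0 <= w k i).
Hypothesis w_next :
  forall k i, (1 <= k)%N -> w k.+1 i = (1 - a k * lam i) ^+ 2 * w k i.
Hypothesis a_bound : forall k, (2 <= k)%N -> L^-1 <= a k <= 1.
Hypothesis a_propertyA : forall k (j : 'I_n.+1) e, (1 <= k)%N ->
  head_sum (w k) j <= e -> 2 * L * e <= w k j -> a k.+1 * lam j <= 3 / 2.

Let L_ge1 : 1 <= L. Proof. by case/andP: (lam_bound ord0) => ? ?; lra. Qed.

Let Linv_gt0 : 0 < L^-1.
Proof. by rewrite invr_gt0; have := L_ge1; lra. Qed.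

Let Linv_le1 : L^-1 <= 1.
Proof. by rewrite invr_le1 ?unitf_gt0 ?L_ge1 //; have := L_ge1; lra. Qed.

Lemma factor_le k i : (2 <= k)%N -> (1 - a k * lam i) ^+ 2 <= L ^+ 2.
Proof.
move=> hk; have /andP[a_ge a_le1] := a_bound hk.
have /andP[lam_ge1 lam_le] := lam_bound i.
have t_ge0 : 0 <= a k * lam i by have := Linv_gt0; have := Linv_le1; nra.
have t_le : a k * lam i <= L by nra.
have := L_ge1; nra.
Qed.

Lemma factor_contraction k i : (2 <= k)%N -> a k * lam i <= 3 / 2 ->
  (1 - a k * lam i) ^+ 2 <= 1 - L^-1 / 4.
Proof.
move=> hk t_le; have /andP[a_ge a_le1] := a_bound hk.
have /andP[lam_ge1 lam_le] := lam_bound i.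
have a_ge0 : 0 <= a k by have := Linv_gt0; lra.
have t_ge : L^-1 <= a k * lam i by exact: le_trans a_ge (ler_peMr a_ge0 lam_ge1).
have := Linv_gt0; have := Linv_le1; nra.
Qed.

Lemma component_R_linear (j : 'I_n.+1) :
  R_linear_to_zero (fun k => head_sum (w k) j) -> R_linear_to_zero (fun k => w k j).
Proof.
move=> [C [c [C_gt0 [/andP[c_gt0 c_lt1] head_le]]]].
have L_gt0 : 0 < L by have := L_ge1; lra.
set q := 1 - L^-1 / 4; set rho := Num.max q c.
have q_gt0 : 0 < q by rewrite /q; have := Linv_le1; lra.
have rho_gt0 : 0 < rho by rewrite lt_max q_gt0.
have rho_lt1 : rho < 1 by rewrite gt_max c_lt1 andbT /q; have := Linv_gt0; lra.
have q_le : q <= rho by rewrite le_max lexx.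
have cX_le k : c ^+ k <= rho ^+ k.
  by apply: lerXn2r; rewrite ?nnegrE ?le_max ?lexx ?orbT // ltW.
set E := 2 * L ^+ 5 * C / rho ^+ 2.
apply: (@R_linear_to_zero_eventually _ _ _ rho 3); first by rewrite rho_gt0.
have E_ge0 : 0 <= E by rewrite /E; apply/ltW/divr_gt0; rewrite ?mulr_gt0 ?exprn_gt0.
apply: (geometric_bound_of_step (v := fun k => w k j) (q := q) (E := E));
  rewrite ?rho_gt0 ?q_le ?(ltW q_gt0) ?E_ge0 ?w_ge0 //.
case=> [//|p] hp; have hp1 : (1 <= p)%N := ltnW hp.
(* Either Property A applies at step [p] and the [j]-th factor contracts, or
   [w p j] is below [2 L C c^p] and two steps enlarge it by at most [L^4]. *)
have [big|small] := lerP (2 * L * (C * c ^+ p)) (w p j).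
- left; rewrite w_next //; apply: ler_wpM2r => //.
  by apply: factor_contraction => //; exact: a_propertyA (head_le p hp1) big.
- right; rewrite !w_next //.
  have f1 := factor_le j hp; have f2 := factor_le j (ltnW hp).
  have sq1 := sqr_ge0 (1 - a p.+1 * lam j); have sq2 := sqr_ge0 (1 - a p * lam j).
  apply: le_trans (_ : _ <= L ^+ 2 * (L ^+ 2 * (2 * L * (C * c ^+ p)))) _.
    apply: ler_pM => //; first by rewrite mulr_ge0.
    by apply: ler_pM => //; exact: ltW.
  have -> : E * rho ^+ p.+2 = 2 * L ^+ 5 * C * rho ^+ p.
    by rewrite /E -[p.+2]/(2 + p)%N exprD mulrA divfK // expf_neq0 // gt_eqF.
  have -> : L ^+ 2 * (L ^+ 2 * (2 * L * (C * c ^+ p))) = 2 * L ^+ 5 * C * c ^+ p.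
    by ring.
  by apply: ler_wpM2l => //; rewrite !mulr_ge0 // ?exprn_ge0 ?ltW.
Qed.

Lemma head_sum_R_linear l : (l <= n.+1)%N -> R_linear_to_zero (fun k => head_sum (w k) l).
Proof.
elim: l => [_|l IH hl].
  apply: (@R_linear_to_zero_eventually _ _ 0 2^-1 0) => [|k _]; first lra.
  by rewrite mul0r /head_sum big_pred0.
have head_l := IH (ltnW hl).
have := R_linear_to_zeroD (@component_R_linear (Ordinal hl) head_l) head_l.
by apply: R_linear_to_zero_le => k _; rewrite head_sumS.
Qed.

End PropertyA.

Definition sqr_coords (R : pzSemiRingType) n (u : 'cV[R]_n) : 'I_n -> R :=
  fun i => u i 0 ^+ 2.

Lemma dotvE (R : realType) n (u v : 'cV[R]_n) : dotv u v = \sum_i u i 0 * v i 0.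
Proof. by rewrite /dotv mxE; apply: eq_bigr => i _; rewrite mxE. Qed.

Lemma enormE (R : realType) n (u : 'cV[R]_n) :
  enorm u = Num.sqrt (\sum_i sqr_coords u i).
Proof. by rewrite /enorm dotvE; congr Num.sqrt; apply: eq_bigr => i _; rewrite expr2. Qed.

Lemma dotv_moment (R : realType) n (lam : 'I_n -> R) (u v z : 'cV[R]_n) (c : R) p q :
  (forall i, u i 0 = c * lam i ^+ p * z i 0) ->
  (forall i, v i 0 = c * lam i ^+ q * z i 0) ->
  dotv u v = c ^+ 2 * moment lam (sqr_coords z) (p + q).
Proof.
move=> u_coord v_coord; rewrite dotvE /moment mulr_sumr.
by apply: eq_bigr => i _; rewrite u_coord v_coord /sqr_coords exprD; ring.
Qed.

Lemma grad_descent_coord (R : realType) n (lam : 'I_n -> R) (b z : 'cV[R]_n) t i :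
  grad lam b (z - t *: grad lam b z) i 0 = (1 - t * lam i) * grad lam b z i 0.
Proof. by rewrite /grad /diagA !mul_diag_mx !mxE; ring. Qed.

Lemma grad_descent_diff_coord (R : realType) n (lam : 'I_n -> R) (b z : 'cV[R]_n) t i :
  (grad lam b (z - t *: grad lam b z) - grad lam b z) i 0
  = - t * lam i * grad lam b z i 0.
Proof. by rewrite /grad /diagA !mul_diag_mx !mxE; ring. Qed.

Section GradientMethod.

Variables (R : realType) (n : nat) (lam : 'I_n.+1 -> R) (b : 'cV[R]_n.+1).
Variables (x : nat -> 'cV[R]_n.+1) (alpha gamma : nat -> R).
Hypotheses (lam1 : lam ord0 = 1)
  (lam_sorted : forall i j : 'I_n.+1, (i <= j)%N -> lam i <= lam j)
  (alpha1_gt0 : 0 < alpha 1%N)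
  (gamma_bound : forall k, (1 <= k)%N -> 0 <= gamma k <= 1)
  (x_next : forall k, (1 <= k)%N -> x k.+1 = x k - alpha k *: grad lam b (x k)).
Hypothesis alpha_def : forall k, (2 <= k)%N -> grad lam b (x k.-1) != 0 ->
  let s := x k - x k.-1 in
  let y := grad lam b (x k) - grad lam b (x k.-1) in
  alpha k = gamma k * (dotv s s / dotv s y) + (1 - gamma k) * (dotv s y / dotv y y).
Hypothesis grad_neq0 : forall k, (1 <= k)%N -> grad lam b (x k) != 0.

Local Notation g k := (grad lam b (x k)).
Local Notation w k := (sqr_coords (g k)).
Local Notation L := (lam ord_max).

Lemma lam_bound i : 1 <= lam i <= L.
Proof. by rewrite -lam1 !lam_sorted // -ltnS. Qed.

Lemma w_next k i : (1 <= k)%N -> w k.+1 i = (1 - alpha k * lam i) ^+ 2 * w k i.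
Proof. by move=> hk; rewrite /sqr_coords x_next // grad_descent_coord exprMn. Qed.

Lemma moment0_gt0 k : (1 <= k)%N -> 0 < moment lam (w k) 0.
Proof.
move=> hk; rewrite /moment; under eq_bigr do rewrite expr0 mul1r.
rewrite lt_def sumr_ge0 ?andbT => [|i _]; last exact: sqr_ge0.
apply: contra (grad_neq0 hk) => /eqP w_sum_eq0; apply/eqP/matrixP => i j.
have := psumr_eq0P (fun i _ => sqr_ge0 _) w_sum_eq0 (i := i) isT.
by rewrite (ord1 j) /sqr_coords => /eqP; rewrite sqrf_eq0 => /eqP ->; rewrite mxE.
Qed.

Lemma alpha_next k : (1 <= k)%N -> alpha k != 0 ->
  alpha k.+1 = gamma k.+1 * moment_ratio lam (w k) 0
               + (1 - gamma k.+1) * moment_ratio lam (w k) 1.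
Proof.
move=> hk alpha_neq0; have := alpha_def (k := k.+1) hk (grad_neq0 hk) => /= ->.
have s_coord i : (x k.+1 - x k) i 0 = - alpha k * lam i ^+ 0 * g k i 0.
  by rewrite x_next // !mxE; ring.
have y_coord i : (g k.+1 - g k) i 0 = - alpha k * lam i ^+ 1 * g k i 0.
  by rewrite x_next // grad_descent_diff_coord expr1.
rewrite (dotv_moment s_coord s_coord) (dotv_moment s_coord y_coord).
rewrite (dotv_moment y_coord y_coord) /moment_ratio /=.
have M_neq0 m : moment lam (w k) m != 0.
  by rewrite gt_eqF // (moment_gt0 lam_bound (fun i => sqr_ge0 _) m (moment0_gt0 hk)).
by rewrite !add0n !add1n; field; rewrite !M_neq0.
Qed.

Lemma alpha_gt0 k : (1 <= k)%N -> 0 < alpha k.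
Proof.
elim: k => [//|[_ _|k IH _]]; first exact: alpha1_gt0.
have M0_gt0 := moment0_gt0 (ltn0Sn k).
rewrite alpha_next ?gt_eqF ?IH //; apply: lt_le_trans (_ : 0 < L^-1) _.
  by rewrite invr_gt0; case/andP: (lam_bound ord0) => ? ?; lra.
apply: convex_comb_ge; rewrite ?gamma_bound //.
- by case/andP: (moment_ratio_bound lam_bound (fun i => sqr_ge0 _) 0 M0_gt0).
- by case/andP: (moment_ratio_bound lam_bound (fun i => sqr_ge0 _) 1 M0_gt0).
Qed.

Lemma alpha_bound k : (2 <= k)%N -> L^-1 <= alpha k <= 1.
Proof.
case: k => [//|k] hk; have M0_gt0 := moment0_gt0 hk.
have /andP[r0_ge r0_le] := moment_ratio_bound lam_bound (fun i => sqr_ge0 _) 0 M0_gt0.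
have /andP[r1_ge r1_le] := moment_ratio_bound lam_bound (fun i => sqr_ge0 _) 1 M0_gt0.
rewrite alpha_next ?gt_eqF ?alpha_gt0 //.
by rewrite convex_comb_ge ?convex_comb_le ?gamma_bound.
Qed.

Lemma alpha_propertyA k (j : 'I_n.+1) e : (1 <= k)%N ->
  head_sum (w k) j <= e -> 2 * L * e <= w k j -> alpha k.+1 * lam j <= 3 / 2.
Proof.
move=> hk head_le wj_ge; have M0_gt0 := moment0_gt0 hk.
have e_ge0 : 0 <= e by apply: le_trans head_le; apply: sumr_ge0 => i _; exact: sqr_ge0.
have L_ge1 : 1 <= L by case/andP: (lam_bound ord0) => ? ?; lra.
have ratio_le m : (m <= 1)%N -> moment_ratio lam (w k) m * lam j <= 3 / 2.
  move=> hm; apply: (moment_ratio_propertyA lam_bound (fun i => sqr_ge0 _) lam_sorted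
    M0_gt0 head_le); apply: le_trans wj_ge; rewrite ler_wpM2r // ler_wpM2l //.
  by case: m hm => [|[|//]] _; rewrite ?expr0 ?expr1.
rewrite alpha_next ?gt_eqF ?alpha_gt0 // mulrDl -[gamma _ * _ * _]mulrA.
by rewrite -[(1 - _) * _ * _]mulrA convex_comb_le ?gamma_bound ?ratio_le.
Qed.

End GradientMethod.

Theorem theorem3 (R : realType) (n : nat) (lam : 'I_n.+1 -> R)
  (b : 'cV[R]_n.+1) (x : nat -> 'cV[R]_n.+1) (alpha gamma : nat -> R)
  (hlam1 : lam ord0 = 1)
  (hlam_sorted : forall i j : 'I_n.+1, (i <= j)%N -> lam i <= lam j)
  (halpha1 : 0 < alpha 1%N)
  (hgamma : forall k, (1 <= k)%N -> 0 <= gamma k <= 1)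
  (hiter : forall k, (1 <= k)%N ->
     x k.+1 = x k - alpha k *: grad lam b (x k))
  (hstep : forall k, (2 <= k)%N -> grad lam b (x k.-1) != 0 ->
     let s := x k - x k.-1 in
     let y := grad lam b (x k) - grad lam b (x k.-1) in
     alpha k = gamma k * (dotv s s / dotv s y)
               + (1 - gamma k) * (dotv s y / dotv y y)) :
  (exists k, (1 <= k)%N /\ grad lam b (x k) = 0)
  \/ R_linear_to_zero (fun k => enorm (grad lam b (x k))).
Proof.
have [|no_zero] := pselect (exists k, (1 <= k)%N /\ grad lam b (x k) = 0).
  by left.
right.
have grad_neq0 k : (1 <= k)%N -> grad lam b (x k) != 0.
  by move=> hk; apply/eqP => gk_eq0; apply: no_zero; exists k.
have lam_bnd := lam_bound hlam1 hlam_sorted.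
have := head_sum_R_linear lam_bnd (fun k i => sqr_ge0 _) (w_next hiter)
  (alpha_bound hlam1 hlam_sorted halpha1 hgamma hiter hstep grad_neq0)
  (alpha_propertyA hlam1 hlam_sorted halpha1 hgamma hiter hstep grad_neq0) (leqnn n.+1).
move/R_linear_to_zero_sqrt; apply: R_linear_to_zero_le => k _.
by rewrite enormE head_sum_all.
Qed.
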